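(* Let $(G,\theta)$ be a $p$-oriented profinite group and let $M$ be a Hilbert 90 module for $(G,\theta)$. Then $M$ is also a Hilbert 90 module for $(H,\theta|_H)$ for every closed subgroup $H$ of $G$.
   Context: A $p$-oriented profinite group is a pair $(G,\theta)$ with $G$ profinite and $\theta\colon G\to\mathbb Z_p^\times$ a continuous homomorphism. Let $S$ be the discrete $G$-module $\mathbb Q/\mathbb Z_{(p)}$ with $g$ acting by multiplication by $\theta(g)$. A Hilbert 90 module for $(G,\theta)$ is a discrete $G$-module $M$ such that (i) $pM=M$, (ii) the $p$-primary torsion subgroup $M\{p\}$ is isomorphic to $S$ as a $G$-module, and (iii) $H^1(H,M)=0$ for every open subgroup $H\subset G$. *)

From HB Require Import structures.
From mathcomp Require Import all_boot all_order all_algebra.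
From mathcomp Require Import all_classical all_reals all_analysis.
Set Implicit Arguments. Unset Strict Implicit. Unset Printing Implicit Defensive.
Import Order.TTheory GRing.Theory Num.Theory.
Local Open Scope classical_set_scope.
Local Open Scope ring_scope.

Record TopGroup (T : topologicalType) := {
  gmul : T -> T -> T;
  ginv : T -> T;
  gone : T;
  gmulA : forall x y z, gmul x (gmul y z) = gmul (gmul x y) z;
  gmul1 : forall x, gmul gone x = x /\ gmul x gone = x;
  gmulV : forall x, gmul (ginv x) x = gone /\ gmul x (ginv x) = gone;
  gmul_cont : continuous (fun xy : T * T => gmul xy.1 xy.2);
  ginv_cont : continuous ginv }.

Definition profinite (T : topologicalType) (G : TopGroup T) : Prop :=
  [/\ compact [set: T], hausdorff_space T & totally_disconnected [set: T]].

Definition is_subgroup T (G : TopGroup T) (H : set T) : Prop :=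
  [/\ H (gone G),
      (forall x y, H x -> H y -> H (gmul G x y)) &
      (forall x, H x -> H (ginv G x))].

Definition open_in (T : topologicalType) (K U : set T) : Prop :=
  U `<=` K /\ exists V : set T, open V /\ U = V `&` K.

(* x represents the p-adic integer with x n = its residue mod p^n *)
Definition Zp_elt (p : nat) (x : nat -> nat) : Prop :=
  forall n, (x n < p ^ n)%N /\ (x n.+1 %% p ^ n)%N = x n.

Definition Zp_unit (p : nat) (x : nat -> nat) : Prop :=
  Zp_elt p x /\ ~~ (p %| x 1%N)%N.

(* Continuity for the inverse-limit topology on Z_p: each coordinate map
   g |-> theta g n (into the discrete Z/p^n) is locally constant. *)
Definition p_orientation (p : nat) T (G : TopGroup T) (theta : T -> nat -> nat)
  : Prop :=
  [/\ forall g, Zp_unit p (theta g),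
      (forall g h n, theta (gmul G g h) n = (theta g n * theta h n %% p ^ n)%N) &
      (forall n k, open [set g | theta g n = k])].

Definition in_Zloc (p : nat) (q : rat) : Prop := ~~ (p %| `|denq q|)%N.

(* action of u in Z_p on the class of q in Q/Z_(p): if the p-part of the
   denominator of q is p^k, multiply q by the residue of u mod p^k
   (well defined modulo Z_(p)). *)
Definition actS (p : nat) (u : nat -> nat) (q : rat) : rat :=
  (u (logn p `|denq q|))%:R * q.

Section H90.
Variables (p : nat) (T : topologicalType) (G : TopGroup T)
          (theta : T -> nat -> nat) (M : zmodType) (act : T -> M -> M).

Definition discrete_module (K : set T) : Prop :=
  [/\ forall m, act (gone G) m = m,
      (forall g h m, K g -> K h -> act (gmul G g h) m = act g (act h m)),
      (forall g m m', K g -> act g (m + m') = act g m + act g m') &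
      (forall m, open_in K [set g | K g /\ act g m = m])].

Definition p_torsion (m : M) : Prop := exists n, m *+ (p ^ n) = 0.

(* M{p} is isomorphic to S as a K-module: an additive map phi : Q -> M with
   kernel exactly Z_(p) (so it induces an injection Q/Z_(p) -> M), image
   exactly M{p}, and K-equivariant for the theta-action on S. *)
Definition torsion_iso_S (K : set T) : Prop :=
  exists phi : rat -> M,
  [/\ forall q r, phi (q + r) = phi q + phi r,
      (forall q, phi q = 0 <-> in_Zloc p q),
      (forall m, p_torsion m <-> exists q, phi q = m) &
      (forall g q, K g -> phi (actS p (theta g) q) = act g (phi q))].

Definition cocycle (H : set T) (c : T -> M) : Prop :=
  (forall g h, H g -> H h -> c (gmul G g h) = c g + act g (c h)) /\
  (forall m, open_in H [set h | H h /\ c h = m]).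

Definition H1_vanishes (H : set T) : Prop :=
  forall c, cocycle H c -> exists m, forall h, H h -> c h = act h m - m.

Definition hilbert90 (K : set T) : Prop :=
  [/\ discrete_module K,
      (forall m : M, exists m' : M, m' *+ p = m),
      torsion_iso_S K &
      (forall H, H `<=` K -> is_subgroup G H -> open_in K H -> H1_vanishes H)].
End H90.

From HB Require Import structures.
From mathcomp Require Import all_boot all_order all_algebra.
From mathcomp Require Import all_classical all_reals all_analysis.

Set Implicit Arguments. Unset Strict Implicit. Unset Printing Implicit Defensive.
Import GRing.Theory.
Local Open Scope classical_set_scope.
Local Open Scope ring_scope.

(* The first three conditions defining a Hilbert 90 module restrict to any subgroup,
   and an open subgroup of a closed subgroup of G is closed in G; so it suffices to
   show H^1(K, M) = 0 for every closed subgroup K.  A continuous cocycle c on the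
   compact group K takes finitely many values and vanishes on a neighbourhood of 1.
   A profinite group has arbitrarily small open normal subgroups, so some open normal
   N fixes the values of c and kills c on K `&` N.  Then c(k n) := c(k) extends c to
   a cocycle on the open subgroup K N, where it is a coboundary by hypothesis.
   Neither the primality of p nor the orientation theta plays a role. *)

Section TopGroupTheory.
Context (T : topologicalType) {G : TopGroup T}.
Local Notation "x * y" := (gmul G x y).
Local Notation "x ^-1" := (ginv G x).
Local Notation "1" := (gone G).

Lemma gmul1g x : 1 * x = x. Proof. by case: (gmul1 G x). Qed.
Lemma gmulg1 x : x * 1 = x. Proof. by case: (gmul1 G x). Qed.
Lemma gmulVg x : x^-1 * x = 1. Proof. by case: (gmulV G x). Qed.
Lemma gmulgV x : x * x^-1 = 1. Proof. by case: (gmulV G x). Qed.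

Lemma gmulKg x y : x^-1 * (x * y) = y.
Proof. by rewrite gmulA gmulVg gmul1g. Qed.
Lemma gmulKVg x y : x * (x^-1 * y) = y.
Proof. by rewrite gmulA gmulgV gmul1g. Qed.
Lemma gmulgK x y : y * x * x^-1 = y.
Proof. by rewrite -gmulA gmulgV gmulg1. Qed.

Lemma ginv_unique x y : x * y = 1 -> y = x^-1.
Proof. by move=> xy1; rewrite -(gmulKg x y) xy1 gmulg1. Qed.
Lemma ginvK x : (x^-1)^-1 = x.
Proof. by symmetry; apply: ginv_unique; rewrite gmulVg. Qed.
Lemma ginvM x y : (x * y)^-1 = y^-1 * x^-1.
Proof. by symmetry; apply: ginv_unique; rewrite -gmulA gmulKVg gmulgV. Qed.
Lemma ginv1 : 1^-1 = 1.
Proof. by symmetry; apply: ginv_unique; rewrite gmulg1. Qed.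

Lemma gconjM y a b : y^-1 * (a * b) * y = (y^-1 * a * y) * (y^-1 * b * y).
Proof. by rewrite !gmulA gmulgK. Qed.
Lemma gconjV y a : y^-1 * a^-1 * y = (y^-1 * a * y)^-1.
Proof. by rewrite !ginvM ginvK gmulA. Qed.
Lemma gconj1 y : y^-1 * 1 * y = 1.
Proof. by rewrite gmulg1 gmulVg. Qed.
Lemma gconjJ y z n : z^-1 * (y^-1 * n * y) * z = (y * z)^-1 * n * (y * z).
Proof. by rewrite ginvM !gmulA. Qed.

Lemma gcvgM (I : Type) (F : set_system I) {FF : Filter F} (f g : I -> T) a b :
  f @ F --> a -> g @ F --> b -> (fun i => f i * g i) @ F --> a * b.
Proof.
by move=> fa gb; apply: (continuous2_cvg _ _ fa gb); exact: (@gmul_cont _ G (a, b)).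
Qed.

Lemma gcvgV (I : Type) (F : set_system I) {FF : Filter F} (f : I -> T) a :
  f @ F --> a -> (fun i => (f i)^-1) @ F --> a^-1.
Proof. by move=> fa; apply: (continuous_cvg _ _ fa); exact: (@ginv_cont _ G a). Qed.

Lemma nbhs_lmul x y (V : set T) : nbhs (x * y) V -> nbhs y [set z | V (x * z)].
Proof. by apply: gcvgM; [exact: cvg_cst | exact: cvg_id]. Qed.

Lemma subgroup_open (S : set T) : is_subgroup G S -> nbhs 1 S -> open S.
Proof.
case=> _ SM _ S1; rewrite openE => x Sx.
have : nbhs (x * 1) [set z | S (x^-1 * z)].
  by apply: nbhs_lmul; rewrite gmulg1 gmulVg.
rewrite gmulg1; apply: filterS => z Sz.
by rewrite -(gmulKVg x z); exact: SM.
Qed.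

End TopGroupTheory.

Section QuasiComponent.
Context (T : topologicalType).

Definition quasi_component (x : T) := [set y | forall C, clopen C -> C x -> C y].

Lemma quasi_component_refl x : quasi_component x x.
Proof. by []. Qed.

Lemma quasi_component_closed x : closed (quasi_component x).
Proof.
move=> y clQy C cC Cx; apply: cC.2.
by apply: (closureS _ clQy) => z /(_ C cC Cx).
Qed.

Lemma not_quasi_componentP x y : ~ quasi_component x y ->
  exists C, [/\ clopen C, C x & ~ C y].
Proof.
move=> /existsNP [C /not_implyP [cC /not_implyP [Cx nCy]]].
by exists C.
Qed.

Hypothesis cT : compact [set: T].

Lemma compact_clopen_separation x (K : set T) : closed K ->
  (forall y, K y -> exists C, [/\ clopen C, C x & ~ C y]) ->
  exists D, [/\ clopen D, D x & forall y, D y -> ~ K y].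
Proof.
move=> clK sepK.
have cK : compact K by exact: (subclosed_compact clK cT).
pose F := filter_from [set C : set T | clopen C /\ C x]
  (fun C => [set D : set T | [/\ clopen D, D x & D `<=` C]]).
have FF : Filter F.
  apply: filter_from_filter; first by exists setT; split; [exact: clopenT|].
  move=> C1 C2 [cC1 C1x] [cC2 C2x]; exists (C1 `&` C2).
    by split; [exact: clopenI|].
  by move=> D [cD Dx DC]; split; split=> // y /DC [].
have [|C [cC Cx] CK] :=
    (compact_near_coveringP K).1 cK (set T) F (fun D y => ~ D y) FF.
  move=> y Ky; have [C [cC Cx nCy]] := sepK y Ky.
  exists (~` C, [set D : set T | [/\ clopen D, D x & D `<=` C]]).
    split; last by exists C.
    by apply: open_nbhs_nbhs; split=> //; exact: closed_openC (cC.2).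
  by move=> [y' D] [/= nCy' [_ _ DC]] /DC.
exists C; split => // y Cy Ky.
exact: (CK C (And3 cC Cx (fun _ p => p)) y Ky Cy).
Qed.

Lemma quasi_component_clopen_nbhs x (U : set T) : open U ->
  quasi_component x `<=` U -> exists D, [/\ clopen D, D x & D `<=` U].
Proof.
move=> oU QU; have [||D [cD Dx DnU]] := @compact_clopen_separation x (~` U).
- exact: open_closedC.
- by move=> y nUy; apply: not_quasi_componentP => /QU.
by exists D; split => // y /DnU /contrapT.
Qed.

Hypothesis hT : hausdorff_space T.

Lemma compact_separate_closed (A1 A2 : set T) : closed A1 -> closed A2 ->
  A1 `&` A2 = set0 ->
  exists U1 U2, [/\ open U1, open U2, A1 `<=` U1, A2 `<=` U2 & U1 `&` U2 = set0].
Proof.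
move=> clA1 clA2 A12.
have snA : set_nbhs A1 (~` A2).
  move=> y A1y; apply: open_nbhs_nbhs; split; first exact: closed_openC.
  by move=> A2y; rewrite -[False]/(set0 y) -A12.
have [S snS clS] := compact_normal hT cT clA1 snA.
have [U1 [oU1 A1U1 U1S]] := (set_nbhsP _ _).1 snS.
exists U1, (~` closure S); split => //.
- exact/closed_openC/closed_closure.
- by move=> y A2y clSy; exact: clS y clSy A2y.
- by apply/disjoints_subset => y /U1S Sy; apply; exact: subset_closure.
Qed.

Lemma quasi_component_closed_cover x (A1 A2 : set T) :
  closed A1 -> closed A2 -> A1 `&` A2 = set0 ->
  quasi_component x `<=` A1 `|` A2 -> A1 x -> quasi_component x `<=` A1.
Proof.
move=> clA1 clA2 A12 QA A1x.
have [U1 [U2 [oU1 oU2 A1U1 A2U2 U12]]] := compact_separate_closed clA1 clA2 A12.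
have [D [cD Dx DU]] : exists D, [/\ clopen D, D x & D `<=` U1 `|` U2].
  apply: quasi_component_clopen_nbhs; first exact: openU.
  by move=> y /QA [/A1U1|/A2U2]; [left|right].
have DU1 : clopen (D `&` U1).
  split; first exact: openI cD.1 oU1.
  suff -> : D `&` U1 = D `&` ~` U2 by apply: closedI cD.2 (open_closedC oU2).
  apply/seteqP; split => y [Dy Uy]; split => //.
    by move=> U2y; rewrite -[False]/(set0 y) -U12.
  by have [|] := DU y Dy.
move=> y Qy; have [_ U1y] := Qy _ DU1 (conj Dx (A1U1 _ A1x)).
have [//|A2y] := QA y Qy.
suff : (U1 `&` U2) y by rewrite U12.
by split; [|exact: A2U2].
Qed.

Lemma quasi_component_connected x : connected (quasi_component x).
Proof.
move=> B [b Bb] [C1 oC1 BC1] [C2 cC2 BC2].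
have clB : closed B.
  by rewrite BC2; apply: closedI => //; exact: quasi_component_closed.
pose B' := quasi_component x `&` ~` C1.
have clB' : closed B'.
  by apply: closedI; [exact: quasi_component_closed | exact: open_closedC].
have BB' : B `&` B' = set0.
  by apply/disjoints_subset => y; rewrite BC1 => -[_ ?] [].
have cover : quasi_component x `<=` B `|` B'.
  by move=> y Qy; have [C1y|nC1y] := pselect (C1 y); [left; rewrite BC1|right].
have [Bx|B'x] := cover x (@quasi_component_refl x).
  apply/seteqP; split; first by rewrite BC1 => y [].
  exact: quasi_component_closed_cover clB clB' BB' cover Bx.
have QB' : quasi_component x `<=` B'.
  apply: (quasi_component_closed_cover clB' clB _ _ B'x); first by rewrite setIC.
  by rewrite setUC.
by move: Bb; rewrite BC1 => -[/QB' []].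
Qed.

Hypothesis tdT : totally_disconnected [set: T].

Lemma quasi_component1 x : quasi_component x `<=` [set x].
Proof.
rewrite -(tdT I) => y Qy.
exists (quasi_component x) => //; split => //; exact: quasi_component_connected.
Qed.

Lemma compact_totally_disconnected_clopen_nbhs x (V : set T) : nbhs x V ->
  exists W, [/\ clopen W, W x & W `<=` V].
Proof.
move=> Vx; have [||W [cW Wx WV]] := @quasi_component_clopen_nbhs x V°.
- exact: open_interior.
- by move=> y /quasi_component1 ->.
by exists W; split => // y /WV; exact: interior_subset.
Qed.

End QuasiComponent.

Section OpenSubgroups.
Context (T : topologicalType) (G : TopGroup T) (cT : compact [set: T]).
Local Notation "x * y" := (gmul G x y).
Local Notation "x ^-1" := (ginv G x).
Local Notation "1" := (gone G).

Definition normal_subgroup (N : set T) :=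
  is_subgroup G N /\ forall y n, N n -> N (y^-1 * n * y).

Lemma open_normal_core (N : set T) : is_subgroup G N -> nbhs 1 N ->
  exists N', [/\ normal_subgroup N', open N' & N' `<=` N].
Proof.
move=> [N1 NM NV] N1N.
pose N' := [set n | forall y, N (y^-1 * n * y)].
have sN' : is_subgroup G N'.
  split; first by move=> y; rewrite gconj1.
  - by move=> a b Na Nb y; rewrite gconjM; apply: NM.
  - by move=> a Na y; rewrite gconjV; apply: NV.
(* y^-1 n y stays in N for n near 1, uniformly in y by compactness of G *)
have N'1 : nbhs 1 N'.
  suff : nbhs 1 [set n | [set: T] `<=` (fun y => N (y^-1 * n * y))].
    by apply: filterS => n Nn y; exact: Nn.
  apply: ((compact_near_coveringP setT).1 cT T (nbhs 1)
     (fun n y => N (y^-1 * n * y))) => y _.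
  have : (fun q : T * T => q.1^-1 * q.2 * q.1) @ nbhs (y, 1) --> y^-1 * 1 * y.
    apply: gcvgM; last exact: cvg_fst.
    by apply: gcvgM; [apply: gcvgV; exact: cvg_fst | exact: cvg_snd].
  by rewrite gconj1; apply.
exists N'; split.
- by split => // y n Nn z; rewrite gconjJ; apply: Nn.
- exact: subgroup_open sN' N'1.
- by move=> n /(_ 1); rewrite ginv1 gmul1g gmulg1.
Qed.

Hypotheses (hT : hausdorff_space T) (tdT : totally_disconnected [set: T]).

Lemma open_subgroup_sub (V : set T) : nbhs 1 V ->
  exists N, [/\ is_subgroup G N, open N & N `<=` V].
Proof.
move=> V1.
have [W [cW W1 WV]] := compact_totally_disconnected_clopen_nbhs cT hT tdT V1.
have cW' : compact W by apply: (subclosed_compact cW.2 cT).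
(* right translation by b near 1 maps W into W, uniformly on the compact W *)
have WM : nbhs 1 [set b | forall w, W w -> W (w * b)].
  apply: ((compact_near_coveringP W).1 cW' T (nbhs 1) (fun b w => W (w * b))).
  move=> w Ww; apply: (@gmul_cont _ G (w, 1)).
  by rewrite /= gmulg1; exact: (open_nbhs_nbhs (conj cW.1 Ww)).
have WV' : nbhs 1 [set b | forall w, W w -> W (w * b^-1)].
  have : (fun b => b^-1) @ nbhs 1 --> 1.
    by rewrite -{2}ginv1; apply: gcvgV; exact: cvg_id.
  by move/(_ _ WM).
pose N := [set g | forall w, W w -> W (w * g) /\ W (w * g^-1)].
have sN : is_subgroup G N.
  split; first by move=> w Ww; rewrite ginv1 gmulg1.
  - move=> g h Ng Nh w Ww; rewrite ginvM !gmulA.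
    by split; [exact: (Nh _ (Ng _ Ww).1).1 | exact: (Ng _ (Nh _ Ww).2).2].
  - by move=> g Ng w Ww; rewrite ginvK; have [] := Ng _ Ww.
exists N; split => //.
- apply: subgroup_open sN _.
  apply: filterS (filterI WM WV') => b [Mb Vb] w Ww.
  by split; [exact: Mb | exact: Vb].
- by move=> g /(_ 1 W1) [+ _]; rewrite gmul1g => /WV.
Qed.

Lemma open_normal_subgroup_sub (V : set T) : nbhs 1 V ->
  exists N, [/\ normal_subgroup N, open N & N `<=` V].
Proof.
move=> /open_subgroup_sub [N0 [sN0 oN0 N0V]].
have [|N [nN oN NN0]] := open_normal_core sN0.
  by apply: open_nbhs_nbhs; split => //; case: sN0.
by exists N; split => // n /NN0 /N0V.
Qed.

End OpenSubgroups.

Lemma open_in_setTE (T : topologicalType) (U : set T) :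
  open_in [set: T] U <-> open U.
Proof.
split=> [[_ [V [oV ->]]]|oU]; first by rewrite setIT.
by split=> //; exists U; rewrite setIT.
Qed.

Lemma open_in_setI (T : topologicalType) (K V : set T) :
  open V -> open_in K (V `&` K).
Proof. by move=> oV; split; [exact: subIsetr | exists V]. Qed.

Lemma compact_locally_constant_finite_image (T : topologicalType) (M : eqType)
    (K : set T) (c : T -> M) :
  compact K -> (forall m, open_in K [set h | K h /\ c h = m]) ->
  exists s : seq M, forall h, K h -> c h \in s.
Proof.
move=> cK oc.
pose F := filter_from [set: seq M] (fun s0 => [set s : seq M | {subset s0 <= s}]).
have FF : Filter F.
  apply: filter_from_filter; first by exists [::].
  move=> s0 s1 _ _; exists (s0 ++ s1) => // s s01s.
  by split => x xs; apply: s01s; rewrite mem_cat xs ?orbT.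
have [|s _ cs] := (compact_near_coveringP K).1 cK (seq M) F
   (fun s h => K h -> c h \in s) FF.
  move=> x Kx; have [_ [V [oV eV]]] := oc (c x).
  have [Vx _] : (V `&` K) x by rewrite -eV.
  exists (V, [set s : seq M | {subset [:: c x] <= s}]).
    by split; [exact: (open_nbhs_nbhs (conj oV Vx)) | exists [:: c x]].
  move=> [y s] [/= Vy cxs] Ky.
  have [_ ->] : [set h | K h /\ c h = c x] y by rewrite eV.
  by apply: cxs; exact: mem_head.
by exists s => h Kh; exact: cs.
Qed.

Section ClosedSubgroups.
Context (T : topologicalType) (G : TopGroup T).
Local Notation "x * y" := (gmul G x y).
Local Notation "x ^-1" := (ginv G x).
Local Notation "1" := (gone G).

Lemma open_in_subgroup_closed (H H' : set T) : closed H -> is_subgroup G H ->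
  is_subgroup G H' -> H' `<=` H -> open_in H H' -> closed H'.
Proof.
move=> clH [_ HM HV] [H'1 H'M _] H'H [_ [V [oV eH']]] y clH'y.
have yH : H y by apply: clH; apply: (closureS H'H).
have V1 : V 1 by move: H'1; rewrite eH' => -[].
(* some h in H' lies in y V^-1, and then h^-1 y is in V `&` H = H' *)
have yV : nbhs y [set a | V (a^-1 * y)].
  have : (fun a => a^-1 * y) @ y --> y^-1 * y.
    by apply: gcvgM; [apply: gcvgV; exact: cvg_id | exact: cvg_cst].
  by rewrite gmulVg; apply; exact: (open_nbhs_nbhs (conj oV V1)).
have [h [H'h Vhy]] := clH'y _ yV.
rewrite -(@gmulKVg _ G h y); apply: H'M => //.
by rewrite eH'; split => //; apply: HM => //; apply: HV; exact: H'H.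
Qed.

End ClosedSubgroups.

Section DiscreteModules.
Context (T : topologicalType) (G : TopGroup T) (M : zmodType) (act : T -> M -> M).
Local Notation "x * y" := (gmul G x y).
Local Notation "x ^-1" := (ginv G x).
Local Notation "1" := (gone G).

Hypothesis dmT : discrete_module G act [set: T].

Lemma act0 g : act g 0 = 0.
Proof.
have [_ _ actD _] := dmT.
by apply: (@addrI _ (act g 0)); rewrite -actD // !addr0.
Qed.

Lemma stabilizer_open m : open [set g | act g m = m].
Proof.
have [_ _ _ /(_ m) /open_in_setTE] := dmT.
by rewrite -[X in open X]/(setT `&` _) setTI.
Qed.

Lemma stabilizer_seq_open (s : seq M) :
  open [set g | forall m, m \in s -> act g m = m].
Proof.
elim: s => [|m s IHs].
  rewrite (_ : [set g | _] = setT); first exact: openT.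
  by apply/seteqP; split.
suff -> : [set g | forall m', m' \in m :: s -> act g m' = m'] =
    [set g | act g m = m] `&` [set g | forall m', m' \in s -> act g m' = m'].
  exact: openI (stabilizer_open m) IHs.
apply/seteqP; split => g /=.
  by move=> fix_ms; split => [|m' m's]; apply: fix_ms; rewrite inE ?eqxx ?m's ?orbT.
by move=> [fix_m fix_s] m'; rewrite inE => /orP [/eqP -> //|]; exact: fix_s.
Qed.

Lemma discrete_module_sub K : discrete_module G act K.
Proof.
have [act1 actM actD _] := dmT.
split => [|g h m _ _|g m m' _|m]; [exact: act1|exact: actM|exact: actD|].
rewrite -[X in open_in _ X]/(K `&` _) setIC; exact: open_in_setI (stabilizer_open m).
Qed.

Lemma cocycle1 K c : is_subgroup G K -> cocycle G act K c -> c 1 = 0.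
Proof.
move=> [K1 _ _] [cM _]; have := cM _ _ K1 K1.
have [act1 _ _ _] := dmT; rewrite gmulg1 act1 => c1.
by apply: (@addrI _ (c 1)); rewrite addr0 -c1.
Qed.

Section CocycleExtension.
Variables (K N : set T) (c : T -> M).
Hypotheses (sK : is_subgroup G K) (nN : normal_subgroup G N)
  (cK : forall g h, K g -> K h -> c (g * h) = c g + act g (c h))
  (c_N : forall n, K n -> N n -> c n = 0)
  (N_fix : forall k n, K k -> N n -> act n (c k) = c k).

Definition subgroup_mul := [set u | exists k n, [/\ K k, N n & u = k * n]].

Definition cocycle_ext (u : T) : M :=
  xget 0 [set m | exists k n, [/\ K k, N n, u = k * n & c k = m]].

Lemma subgroup_mul_subgroup : is_subgroup G subgroup_mul.
Proof.
have [K1 KM KV] := sK; have [[N1 NM NV] NJ] := nN.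
split; first by exists 1, 1; rewrite gmulg1.
- move=> _ _ [k1 [n1 [Kk1 Nn1 ->]]] [k2 [n2 [Kk2 Nn2 ->]]].
  exists (k1 * k2), (k2^-1 * n1 * k2 * n2).
  by split; [exact: KM | apply: NM => //; exact: NJ | rewrite !gmulA gmulgK].
- move=> _ [k [n [Kk Nn ->]]].
  exists k^-1, (k^-1^-1 * n^-1 * k^-1); split; [exact: KV|exact/NJ/NV|].
  by rewrite ginvM ginvK !gmulA gmulVg gmul1g.
Qed.

Lemma subgroup_mul_open : open N -> open subgroup_mul.
Proof.
move=> oN; have [K1 _ _] := sK; have [[N1 _ _] _] := nN.
apply: (subgroup_open subgroup_mul_subgroup).
apply: filterS (open_nbhs_nbhs (conj oN N1)) => n Nn.
by exists 1, n; rewrite gmul1g.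
Qed.

Lemma cocycle_extE k n : K k -> N n -> cocycle_ext (k * n) = c k.
Proof.
move=> Kk Nn; have [_ KM KV] := sK; have [[_ NM NV] _] := nN.
pose S := [set m | exists k' n', [/\ K k', N n', k * n = k' * n' & c k' = m]].
have [k' [n' [Kk' Nn' kn_eq <-]]] : S (cocycle_ext (k * n)).
  by apply: (@xgetI _ 0 S (c k)); exists k, n.
(* k = k' n' n^-1, and c vanishes on the element k'^-1 k of K `&` N *)
have kk'_eq : k'^-1 * k = n' * n^-1.
  by rewrite -(@gmulgK _ G n k) kn_eq -gmulA gmulKg.
have Kkk' : K (k'^-1 * k) by apply: KM => //; exact: KV.
have Nkk' : N (k'^-1 * k) by rewrite kk'_eq; apply: NM => //; exact: NV.
by rewrite -[in RHS](@gmulKVg _ G k' k) (cK Kk' Kkk') (c_N Kkk' Nkk') act0 addr0.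
Qed.

Lemma cocycle_ext_cocycle : open N -> cocycle G act subgroup_mul cocycle_ext.
Proof.
move=> oN; have [_ KM _] := sK; have [[_ NM _] NJ] := nN.
have [_ actM _ _] := dmT.
split=> [_ _ [k1 [n1 [Kk1 Nn1 ->]]] [k2 [n2 [Kk2 Nn2 ->]]]|m].
  have Nn : N (k2^-1 * n1 * k2 * n2) by apply: NM => //; exact: NJ.
  have -> : k1 * n1 * (k2 * n2) = k1 * k2 * (k2^-1 * n1 * k2 * n2).
    by rewrite !gmulA gmulgK.
  rewrite !cocycle_extE // ?cK //; last exact: KM.
  by rewrite actM // (N_fix Kk2 Nn1).
split; first by move=> u [].
exists [set x | exists k, [/\ K k, c k = m & N (k^-1 * x)]]; split.
  rewrite openE => x [k [Kk ckm Nx]].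
  apply: filterS (nbhs_lmul (open_nbhs_nbhs (conj oN Nx))) => y Ny.
  by exists k.
apply/seteqP; split => u.
  move=> [[k [n [Kk Nn ->]]] <-]; split; last by exists k, n.
  by exists k; rewrite cocycle_extE // gmulKg.
move=> [[k [Kk <- Nx]] KNu]; split => //.
by rewrite -(@gmulKVg _ G k u) cocycle_extE.
Qed.

End CocycleExtension.

End DiscreteModules.

Lemma torsion_iso_S_sub (p : nat) (T : topologicalType) (theta : T -> nat -> nat)
    (M : zmodType) (act : T -> M -> M) (K : set T) :
  torsion_iso_S p theta act [set: T] -> torsion_iso_S p theta act K.
Proof. by move=> [phi [? ? ? phiJ]]; exists phi; split => // g q _; exact: phiJ. Qed.

Section ProfiniteCohomology.
Context (T : topologicalType) (G : TopGroup T) (M : zmodType) (act : T -> M -> M).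
Local Notation "x * y" := (gmul G x y).
Local Notation "1" := (gone G).
Hypotheses (cT : compact [set: T]) (hT : hausdorff_space T)
  (tdT : totally_disconnected [set: T]) (dmT : discrete_module G act [set: T]).
Hypothesis H1_open : forall U, U `<=` [set: T] -> is_subgroup G U ->
  open_in [set: T] U -> H1_vanishes G act U.

Lemma H1_vanishes_closed_subgroup K : closed K -> is_subgroup G K ->
  H1_vanishes G act K.
Proof.
move=> clK sK c cc; have [K1 _ _] := sK; have [cK c_open] := cc.
have [s cs] := compact_locally_constant_finite_image
  (subclosed_compact clK cT (@subsetT _ K)) c_open.
have [_ [V [oV c0]]] := c_open 0.
have c_V n : K n -> V n -> c n = 0.
  by move=> Kn Vn; have [] : [set h | K h /\ c h = 0] n by rewrite c0.
have V1 : V 1.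
  have : [set h | K h /\ c h = 0] 1 by split => //; exact: (cocycle1 dmT sK cc).
  by rewrite c0 => -[].
have [N [nN oN NV]] : exists N, [/\ normal_subgroup G N, open N &
    N `<=` V `&` [set g | forall m, m \in s -> act g m = m]].
  apply: open_normal_subgroup_sub => //; apply: filterI.
    exact: open_nbhs_nbhs.
  apply: open_nbhs_nbhs; split; first exact: (stabilizer_seq_open dmT).
  by move=> m _; case: dmT.
have c_N n : K n -> N n -> c n = 0 by move=> Kn /NV [Vn _]; exact: c_V.
have N_fix k n : K k -> N n -> act n (c k) = c k.
  by move=> Kk /NV [_ fix_s]; apply: fix_s; exact: cs.
have oKN : open_in [set: T] (subgroup_mul G K N).
  exact/open_in_setTE/(subgroup_mul_open sK nN).
have [m cm] := H1_open (@subsetT _ _) (subgroup_mul_subgroup sK nN) oKN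
  (cocycle_ext_cocycle dmT sK nN cK c_N N_fix oN).
exists m => k Kk; have [[N1 _ _] _] := nN.
rewrite -(cocycle_extE dmT sK nN cK c_N Kk N1) gmulg1; apply: cm.
by exists k, 1; rewrite gmulg1.
Qed.

End ProfiniteCohomology.

Unset Implicit Arguments.
Theorem lemma2p5 (p : nat) (T : topologicalType) (G : TopGroup T)
    (theta : T -> nat -> nat) (M : zmodType) (act : T -> M -> M) :
  prime p -> profinite G -> p_orientation p G theta ->
  hilbert90 p G theta act [set: T] ->
  forall H : set T, closed H -> is_subgroup G H ->
    hilbert90 p G theta act H.
Proof.
move=> _ [cT hT tdT] _ [dmT divM torsT H1T] H clH sH; split.
- exact: (discrete_module_sub dmT).
- exact: divM.
- by apply: torsion_iso_S_sub; exact: torsT.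
- move=> H' H'H sH' oH'; apply: (H1_vanishes_closed_subgroup cT hT tdT dmT H1T _ sH').
  exact: open_in_subgroup_closed clH sH sH' H'H oH'.
Qed.
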